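(* Let $n\ge 3$, $m\ge 2$, and $F,R$ be as in the context. The group $(R\cap[F,F])/[R,F]$ is generated by the images of the elements $[s_i,s_j]$ ($1\le i<j-1\le n-2$), $[s_i,s_{i+1},s_i]$ and $[s_i,s_{i+1},s_is_{i+1}^{-1}]$ ($1\le i\le n-2$), and $[[s_i,s_{i+1}],[s_{i+1},s_{i+2}]]$ ($1\le i\le n-3$).
   Context: Commutator conventions: $[a,b]=a^{-1}b^{-1}ab$, $a^b=b^{-1}ab$, and commutators are left-normed: $[a_1,\dots,a_k]=[[a_1,\dots,a_{k-1}],a_k]$. Let $F$ be the free group on $s_1,\dots,s_{n-1}$ and let $R$ be the normal closure in $F$ of the following relators: $s_i^m$ ($1\le i\le n-1$); $[s_i,s_j]$ ($1\le i<j-1\le n-2$); $[s_i,s_{i+1},s_i]$ and $[s_i,s_{i+1},s_{i+1}]$ ($1\le i\le n-2$); $[[s_i,s_{i+1}],[s_{i+1},s_{i+2}]]$ ($1\le i\le n-3$). It is known that $F/R\cong \mathrm{UT}_n(\mathbb Z/m\mathbb Z)$ via $s_i\mapsto I+E_{i,i+1}$. *)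

(* A concrete model of the free group on the
   generators s_1, ..., s_{n-1}: freely reduced words over letters
   (i, b), where (i, false) = s_i and (i, true) = s_i^{-1}. *)
From mathcomp Require Import all_boot.
Set Implicit Arguments. Unset Strict Implicit. Unset Printing Implicit Defensive.

Definition letter := (nat * bool)%type.
Definition word := seq letter.

Definition linv (a : letter) : letter := (a.1, ~~ a.2).

Definition push (a : letter) (w : word) : word :=
  match w with
  | b :: w' => if b == linv a then w' else a :: w
  | [::] => [:: a]
  end.

Definition wone : word := [::].
Definition wmul (x y : word) : word := foldr push y x.
Definition winv (x : word) : word := rev (map linv x).

Fixpoint reduced (w : word) : bool :=
  match w with
  | a :: ((b :: _) as w') => (b != linv a) && reduced w'
  | _ => true
  end.

Definition inF (n : nat) (w : word) : bool :=
  reduced w && all (fun a => (0 < a.1) && (a.1 < n)) w.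

Definition gen (i : nat) : word := [:: (i, false)].
Definition wpow (x : word) (k : nat) : word := iter k (wmul x) wone.

(* conventions: [a,b] = a^-1 b^-1 a b, a^b = b^-1 a b *)
Definition comm (a b : word) : word := wmul (winv a) (wmul (winv b) (wmul a b)).
Definition conj (a b : word) : word := wmul (winv b) (wmul a b).
Definition comm3 (a b c : word) : word := comm (comm a b) c.

Inductive Gen (S : word -> Prop) : word -> Prop :=
| Gen_one : Gen S wone
| Gen_in w : S w -> Gen S w
| Gen_mul x y : Gen S x -> Gen S y -> Gen S (wmul x y)
| Gen_inv x : Gen S x -> Gen S (winv x).

Definition NormClos (n : nat) (S : word -> Prop) : word -> Prop :=
  Gen (fun w => exists r f, S r /\ inF n f /\ w = conj r f).

(* the defining relators (indices as in the paper, 1-based) *)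
Definition Relators (n m : nat) (w : word) : Prop :=
  (exists i, 1 <= i <= n - 1 /\ w = wpow (gen i) m) \/
  (exists i j, 1 <= i /\ i + 1 < j /\ j <= n - 1 /\ w = comm (gen i) (gen j)) \/
  (exists i, 1 <= i <= n - 2 /\ w = comm3 (gen i) (gen i.+1) (gen i)) \/
  (exists i, 1 <= i <= n - 2 /\ w = comm3 (gen i) (gen i.+1) (gen i.+1)) \/
  (exists i, 1 <= i <= n - 3 /\
     w = comm (comm (gen i) (gen i.+1)) (comm (gen i.+1) (gen i.+2))).

Definition Rsub (n m : nat) : word -> Prop := NormClos n (Relators n m).

Definition FF (n : nat) : word -> Prop :=
  Gen (fun w => exists a b, inF n a /\ inF n b /\ w = comm a b).

Definition RF (n m : nat) : word -> Prop :=
  Gen (fun w => exists r f, Rsub n m r /\ inF n f /\ w = comm r f).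

Definition Gens (n : nat) (w : word) : Prop :=
  (exists i j, 1 <= i /\ i + 1 < j /\ j <= n - 1 /\ w = comm (gen i) (gen j)) \/
  (exists i, 1 <= i <= n - 2 /\ w = comm3 (gen i) (gen i.+1) (gen i)) \/
  (exists i, 1 <= i <= n - 2 /\
     w = comm3 (gen i) (gen i.+1) (wmul (gen i) (winv (gen i.+1)))) \/
  (exists i, 1 <= i <= n - 3 /\
     w = comm (comm (gen i) (gen i.+1)) (comm (gen i.+1) (gen i.+2))).

(* F is modelled by freely reduced words.  Let H be the subgroup
   generated by the proposed generators together with [R,F].  The theorem
   states  Gens ⊆ R ∩ [F,F]  and  R ∩ [F,F] ⊆ H.

   Gens ⊆ R ∩ [F,F]: every proposed generator is a commutator; each is a
   relator, except [s_i,s_(i+1),s_i s_(i+1)^-1], which the identity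
   [comm_mulV] writes as a conjugate of a product of two relators.

   R ∩ [F,F] ⊆ H: H is normal in F, since u^f = u [u,f] with [u,f] ∈ [R,F].
   Modulo H, a conjugate r^f of r ∈ R equals r, elements of R are central,
   and every relator other than a power P_i = s_i^m lies in H (for
   [s_i,s_(i+1),s_(i+1)] by [comm_from_mulV]).  Hence each w ∈ R is
   congruent to D(b) D(a)^-1 for ordered products D(a) = ∏_i P_i^(a_i).
   If w ∈ [F,F], all its exponent sums vanish; the exponent sum of s_i in
   D(a) is m a_i, so D(a) = D(b) and w ∈ H. *)

From mathcomp Require Import all_boot zify.
From Stdlib Require Import ZArith Lia.
Set Implicit Arguments. Unset Strict Implicit. Unset Printing Implicit Defensive.

Lemma linvK (a : letter) : linv (linv a) = a.
Proof. by case: a => i []. Qed.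

Lemma reduced_behead (a : letter) (w : word) : reduced (a :: w) -> reduced w.
Proof. by case: w => //= b w /andP[]. Qed.

Lemma push_red (a : letter) (w : word) : reduced w -> reduced (push a w).
Proof.
case: w => //= b w Hw; case: ifP => [_|Hb]; first exact: reduced_behead Hw.
by rewrite /= Hb.
Qed.

Lemma pushK (a : letter) (w : word) : reduced w -> push a (push (linv a) w) = w.
Proof.
case: w => [|b w] /=; first by rewrite eqxx.
case: ifP => [/eqP Hb Hw | Hb Hw] /=.
- rewrite linvK in Hb; subst b.
  by case: w Hw => [|c w] //= /andP[Hc _]; rewrite (negbTE Hc).
- by rewrite ?linvK eqxx.
Qed.

Lemma pushKV (a : letter) (w : word) : reduced w -> push (linv a) (push a w) = w.
Proof. by move=> Hw; rewrite -{2}(linvK a) pushK. Qed.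

Lemma wmul_red (x y : word) : reduced y -> reduced (wmul x y).
Proof. by elim: x => //= a x IH Hy; apply/push_red/IH. Qed.

Lemma wmul_push (a : letter) (w z : word) :
  reduced z -> wmul (push a w) z = push a (wmul w z).
Proof.
case: w => [|b w] //= Hz; case: ifP => //= /eqP ->.
by rewrite pushK // wmul_red.
Qed.

Lemma wmulA (x y z : word) : reduced z -> wmul (wmul x y) z = wmul x (wmul y z).
Proof. by move=> Hz; elim: x => //= a x IH; rewrite wmul_push // IH. Qed.

Lemma wmul1 (x : word) : reduced x -> wmul x wone = x.
Proof.
elim: x => //= a x IH Hx; rewrite IH; last exact: reduced_behead Hx.
case: x Hx {IH} => //= b x /andP[Hb _]; case: ifP => // /eqP E.
by rewrite E eqxx in Hb.
Qed.

Lemma wmul_cat (x y z : word) : wmul (x ++ y) z = wmul x (wmul y z).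
Proof. by rewrite /wmul foldr_cat. Qed.

Lemma winv_cons (a : letter) (x : word) : winv (a :: x) = winv x ++ [:: linv a].
Proof. by rewrite /winv /= rev_cons cats1. Qed.

Lemma winvK (x : word) : winv (winv x) = x.
Proof.
rewrite /winv map_rev revK -map_comp -[RHS]map_id.
by apply: eq_map => a /=; rewrite linvK.
Qed.

Lemma wmulVK (x z : word) : reduced z -> wmul (winv x) (wmul x z) = z.
Proof.
move=> Hz; elim: x => //= a x IH.
by rewrite winv_cons wmul_cat /= pushKV ?IH // wmul_red.
Qed.

Lemma wmulKV (x z : word) : reduced z -> wmul x (wmul (winv x) z) = z.
Proof. by move=> Hz; rewrite -{1}(winvK x) wmulVK. Qed.

Lemma reduced_sorted (w : word) : reduced w = sorted (fun a b => b != linv a) w.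
Proof. by elim: w => // a [|b w] //= ->. Qed.

Lemma winv_red (x : word) : reduced x -> reduced (winv x).
Proof.
rewrite !reduced_sorted /winv rev_sorted sorted_map.
by apply: sub_sorted => a b /=; apply: contra => /eqP ->; rewrite linvK.
Qed.

Lemma red1 : reduced wone. Proof. by []. Qed.

Lemma wpow_red (x : word) (k : nat) : reduced (wpow x k).
Proof. by elim: k => //= k IH; apply: wmul_red. Qed.

Lemma comm_red (x y : word) : reduced y -> reduced (comm x y).
Proof. by move=> Hy; rewrite /comm !wmul_red. Qed.

Lemma conj_red (x y : word) : reduced y -> reduced (conj x y).
Proof. by move=> Hy; rewrite /conj !wmul_red. Qed.

Create HintDb reduced.
#[export] Hint Resolve red1 wmul_red winv_red wpow_red comm_red conj_red : reduced.
Ltac rd := solve [auto 50 with reduced].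

Lemma wmulV (x : word) : reduced x -> wmul x (winv x) = wone.
Proof. by move=> Hx; rewrite -(wmul1 (winv_red Hx)) wmulKV. Qed.

Lemma wmulVx (x : word) : reduced x -> wmul (winv x) x = wone.
Proof. by move=> Hx; rewrite -{2}(wmul1 Hx) wmulVK. Qed.

Lemma winvM (x y : word) : reduced x -> reduced y ->
  winv (wmul x y) = wmul (winv y) (winv x).
Proof.
move=> Hx Hy.
rewrite -[RHS](wmulVK (wmul x y)); last rd.
by rewrite wmulA ?wmulKV ?wmulV ?wmul1; rd.
Qed.

Lemma wpowD (x : word) (a b : nat) : wpow x (a + b) = wmul (wpow x a) (wpow x b).
Proof. by elim: a => //= a IH; rewrite IH wmulA //; rd. Qed.

Ltac gsimp := repeat (rewrite ?winvK; first [rewrite winvM | rewrite wmulA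
  | rewrite wmulKV | rewrite wmulVK | rewrite wmulV | rewrite wmulVx
  | rewrite wmul1]; try rd); rewrite ?winvK.

Lemma conj1 (f : word) : reduced f -> conj wone f = wone.
Proof. by move=> Hf; rewrite /conj /= wmulVx. Qed.

Lemma conjM (x y f : word) : reduced f ->
  conj (wmul x y) f = wmul (conj x f) (conj y f).
Proof. by move=> Hf; rewrite /conj; gsimp. Qed.

Lemma conjV (x f : word) : reduced x -> reduced f ->
  conj (winv x) f = winv (conj x f).
Proof. by move=> Hx Hf; rewrite /conj; gsimp. Qed.

Lemma conj_conj (r g f : word) : reduced r -> reduced g -> reduced f ->
  conj (conj r g) f = conj r (wmul g f).
Proof. by move=> Hr Hg Hf; rewrite /conj; gsimp. Qed.

Lemma conj_by1 (r : word) : reduced r -> conj r wone = r.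
Proof. by move=> Hr; rewrite /conj /= wmul1. Qed.

Lemma conj_comm (r f : word) : reduced r -> reduced f -> conj r f = wmul r (comm r f).
Proof. by move=> Hr Hf; rewrite /comm; gsimp. Qed.

(* The commutator identities relating [x,a], [x,c] and [x, a c^-1]; with
   x = [s_i,s_(i+1)], a = s_i, c = s_(i+1) they connect the two relators
   [s_i,s_(i+1),s_i], [s_i,s_(i+1),s_(i+1)] and the generator
   [s_i,s_(i+1),s_i s_(i+1)^-1]. *)
Lemma comm_mulV (x a c : word) : reduced x -> reduced a -> reduced c ->
  comm x (wmul a (winv c)) =
  winv (conj (wmul (winv (comm x a)) (comm x c)) (winv c)).
Proof. by move=> Hx Ha Hc; rewrite /comm /conj; gsimp. Qed.

Lemma comm_from_mulV (x a c : word) : reduced x -> reduced a -> reduced c ->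
  comm x c = wmul (comm x a) (conj (winv (comm x (wmul a (winv c)))) c).
Proof. by move=> Hx Ha Hc; rewrite /comm /conj; gsimp. Qed.

Lemma Gen_sub (S T : word -> Prop) (w : word) :
  (forall u, S u -> Gen T u) -> Gen S w -> Gen T w.
Proof.
move=> ST; elim=> {w} [|w /ST //|x y _ Hx _ Hy|x _ Hx].
- exact: Gen_one.
- exact: Gen_mul.
- exact: Gen_inv.
Qed.

Lemma Gen_wpow (S : word -> Prop) (x : word) (k : nat) : Gen S x -> Gen S (wpow x k).
Proof. by move=> Gx; elim: k => [|k IH] /=; [exact: Gen_one | exact: Gen_mul]. Qed.

Lemma Gen_red (S : word -> Prop) (w : word) :
  (forall u, S u -> reduced u) -> Gen S w -> reduced w.
Proof. by move=> SR; elim=> //; auto with reduced. Qed.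

Lemma Gen_conj (S T : word -> Prop) (f w : word) :
  (forall u, S u -> reduced u) -> reduced f ->
  (forall u, S u -> Gen T (conj u f)) -> Gen S w -> Gen T (conj w f).
Proof.
move=> SR Hf ST; elim=> {w} [|w /ST //|x y _ Hx _ Hy|x Gx Hx].
- by rewrite conj1 //; exact: Gen_one.
- by rewrite conjM //; exact: Gen_mul.
- by rewrite conjV ?(Gen_red SR Gx) //; exact: Gen_inv.
Qed.

Lemma inF_red (n : nat) (w : word) : inF n w -> reduced w.
Proof. by case/andP. Qed.

#[export] Hint Extern 3 (is_true (reduced _)) => apply: inF_red; eassumption : reduced.

Section ElementsOfF.
Variable n : nat.

Lemma inF_mul (x y : word) : inF n x -> inF n y -> inF n (wmul x y).
Proof.
case/andP=> _ Ax /andP[Hy Ay]; rewrite /inF wmul_red //=.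
elim: x Ax => //= a x IH /andP[Ha Ax]; case: (wmul x y) (IH Ax) => /= [_|b w].
  by rewrite Ha.
by move=> /andP[Hb Aw]; case: ifP => _ //=; rewrite Ha Hb.
Qed.

Lemma inF_inv (x : word) : inF n x -> inF n (winv x).
Proof.
case/andP=> Hx Ax; rewrite /inF winv_red //= /winv all_rev all_map.
by apply: sub_all Ax => a.
Qed.

Lemma inF_gen (i : nat) : 0 < i < n -> inF n (gen i).
Proof. by rewrite /inF /gen /= andbT. Qed.

Lemma inF_comm (x y : word) : inF n x -> inF n y -> inF n (comm x y).
Proof. by move=> Hx Hy; rewrite /comm; do ! (apply: inF_mul || apply: inF_inv). Qed.

Lemma inF_conj (x y : word) : inF n x -> inF n y -> inF n (conj x y).
Proof. by move=> Hx Hy; rewrite /conj; do ! (apply: inF_mul || apply: inF_inv). Qed.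

Lemma inF_wpow (x : word) (k : nat) : inF n x -> inF n (wpow x k).
Proof. by move=> Hx; elim: k => //= k IH; apply: inF_mul. Qed.

Lemma Gen_inF (S : word -> Prop) (w : word) :
  (forall u, S u -> inF n u) -> Gen S w -> inF n w.
Proof.
move=> SF; elim=> {w} [//|w /SF //|x y _ Hx _ Hy|x _ Hx].
- exact: inF_mul.
- exact: inF_inv.
Qed.

End ElementsOfF.

Ltac inF_auto := repeat (apply: inF_comm || apply: inF_mul || apply: inF_inv
  || apply: inF_wpow || (apply: inF_gen; lia)).

Definition sg (i : nat) (a : letter) : Z :=
  if a.1 == i then (if a.2 then (-1)%Z else 1%Z) else 0%Z.
Definition esum (i : nat) (w : word) : Z := foldr (fun a s => (sg i a + s)%Z) 0%Z w.

Lemma sg_linv (i : nat) (a : letter) : sg i (linv a) = (- sg i a)%Z.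
Proof. by case: a => j [] /=; rewrite /sg /=; case: eqP. Qed.

Lemma esum_push (i : nat) (a : letter) (w : word) :
  esum i (push a w) = (sg i a + esum i w)%Z.
Proof. by case: w => //= b w; case: ifP => //= /eqP ->; rewrite sg_linv; lia. Qed.

Lemma esum_mul (i : nat) (x y : word) : esum i (wmul x y) = (esum i x + esum i y)%Z.
Proof. by elim: x => //= a x IH; rewrite esum_push IH; lia. Qed.

Lemma esum_inv (i : nat) (x : word) : esum i (winv x) = (- esum i x)%Z.
Proof.
have esum_cat y z : esum i (y ++ z) = (esum i y + esum i z)%Z.
  by elim: y => //= a y ->; lia.
by elim: x => //= a x IH; rewrite winv_cons esum_cat IH /= sg_linv; lia.
Qed.

Lemma esum_comm (i : nat) (x y : word) : esum i (comm x y) = 0%Z.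
Proof. by rewrite /comm !esum_mul !esum_inv; lia. Qed.

Lemma esum_wpow (i : nat) (x : word) (k : nat) :
  esum i (wpow x k) = (Z.of_nat k * esum i x)%Z.
Proof. by elim: k => // k IH; rewrite [wpow x k.+1]/= esum_mul IH Nat2Z.inj_succ; lia. Qed.

Lemma esum_gen (i j : nat) : esum i (gen j) = if j == i then 1%Z else 0%Z.
Proof. by rewrite /esum /= /sg /=; case: eqP; lia. Qed.

Lemma esum_Gen (i : nat) (S : word -> Prop) (w : word) :
  (forall u, S u -> esum i u = 0%Z) -> Gen S w -> esum i w = 0%Z.
Proof.
move=> S0; elim=> {w} [//|u /S0 //|x y _ Hx _ Hy|x _ Hx].
- by rewrite esum_mul Hx Hy.
- by rewrite esum_inv Hx.
Qed.

Lemma esum_FF (n i : nat) (w : word) : FF n w -> esum i w = 0%Z.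
Proof. by apply: esum_Gen => u [a [b [_ [_ ->]]]]; exact: esum_comm. Qed.

Section Presentation.
Variables n m : nat.

Notation R := (Rsub n m).

Lemma Relators_inF (r : word) : Relators n m r -> inF n r.
Proof.
by case=> [[i [? ->]]|[[i [j [? [? [? ->]]]]]|[[i [? ->]]|[[i [? ->]]|[i [? ->]]]]]];
  rewrite ?/comm3; inF_auto.
Qed.

Lemma Relators_R (r : word) : Relators n m r -> R r.
Proof.
move=> Hr; have Fr := Relators_inF Hr.
by rewrite -(conj_by1 (inF_red Fr)); apply: Gen_in; exists r, wone.
Qed.

Lemma R_inF (w : word) : R w -> inF n w.
Proof.
by apply: Gen_inF => u [r [f [Hr [Hf ->]]]]; apply: inF_conj => //; exact: Relators_inF.
Qed.

Lemma R_conj (w f : word) : R w -> inF n f -> R (conj w f).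
Proof.
move=> Rw Ff; apply: Gen_conj Rw; last first.
- move=> u [r [g [Hr [Fg ->]]]]; have Fr := Relators_inF Hr.
  apply: Gen_in; exists r, (wmul g f); split=> //; split; first exact: inF_mul.
  by rewrite conj_conj; rd.
- rd.
- by move=> u [r [g [Hr [Fg ->]]]]; have Fr := Relators_inF Hr; rd.
Qed.

Lemma Gens_comm (w : word) : Gens n w -> exists a b, [/\ inF n a, inF n b & w = comm a b].
Proof.
case=> [[i [j [? [? [? ->]]]]]|[[i [? ->]]|[[i [? ->]]|[i [? ->]]]]].
- by exists (gen i), (gen j); split=> //; inF_auto.
- by exists (comm (gen i) (gen i.+1)), (gen i); split=> //; inF_auto.
- by exists (comm (gen i) (gen i.+1)), (wmul (gen i) (winv (gen i.+1))); split=> //; inF_auto.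
- by exists (comm (gen i) (gen i.+1)), (comm (gen i.+1) (gen i.+2)); split=> //; inF_auto.
Qed.

Lemma Gens_FF (w : word) : Gens n w -> FF n w.
Proof. by case/Gens_comm => a [b [Fa Fb ->]]; apply: Gen_in; exists a, b. Qed.

Lemma Gens_R (w : word) : Gens n w -> R w.
Proof.
case=> [[i [j [? [? [? ->]]]]]|[[i [? ->]]|[[i [? ->]]|[i [? ->]]]]].
- by apply: Relators_R; right; left; exists i, j.
- by apply: Relators_R; right; right; left; exists i.
- have Fi : inF n (gen i) by inF_auto.
  have Fi1 : inF n (gen i.+1) by inF_auto.
  have Fc : inF n (comm (gen i) (gen i.+1)) by inF_auto.
  rewrite /comm3 comm_mulV; try rd.
  apply/Gen_inv/R_conj; last exact: inF_inv.
  apply: Gen_mul; first apply: Gen_inv.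
  + by apply: Relators_R; right; right; left; exists i.
  + by apply: Relators_R; right; right; right; left; exists i.
- by apply: Relators_R; right; right; right; right; exists i.
Qed.

End Presentation.

Section Quotient.
Variables n m : nat.

Notation R := (Rsub n m).

Definition Hsub : word -> Prop := Gen (fun u => Gens n u \/ RF n m u).
Notation H := Hsub.

(* [R,F] ⊆ R, as [r,f] = r^-1 r^f *)
Lemma RF_R (w : word) : RF n m w -> R w.
Proof.
apply: Gen_sub => u [r [f [Hr [Ff ->]]]].
exact: (Gen_mul (Gen_inv Hr) (R_conj Hr Ff)).
Qed.

Lemma comm_H (r f : word) : R r -> inF n f -> H (comm r f).
Proof. by move=> Rr Ff; apply/Gen_in; right; apply: Gen_in; exists r, f. Qed.

Lemma Hgen_R (u : word) : Gens n u \/ RF n m u -> R u.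
Proof. by case; [exact: Gens_R | exact: RF_R]. Qed.

(* H is normal in F: u^f = u [u,f] with [u,f] in [R,F]. *)
Lemma H_conj (w f : word) : H w -> inF n f -> H (conj w f).
Proof.
move=> Hw Ff; apply: Gen_conj Hw; first by move=> u /Hgen_R/R_inF/inF_red.
- rd.
- move=> u Hu; have Fu := R_inF (Hgen_R Hu).
  rewrite conj_comm; try rd.
  by apply: Gen_mul; [exact: Gen_in | exact/comm_H/Ff/Hgen_R].
Qed.

Lemma esum_H (i : nat) (w : word) : H w -> esum i w = 0%Z.
Proof.
apply: esum_Gen => u [/Gens_FF/esum_FF //|].
by apply: esum_Gen => v [r [f [_ [_ ->]]]]; exact: esum_comm.
Qed.

(* Every relator except the powers s_i^m lies in H; for
   [s_i,s_(i+1),s_(i+1)] this uses comm_from_mulV and normality of H. *)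
Lemma Relators_H (r : word) : Relators n m r ->
  (exists i, 1 <= i <= n - 1 /\ r = wpow (gen i) m) \/ H r.
Proof.
case=> [Hp|[[i [j [? [? [? ->]]]]]|[[i [? ->]]|[[i [? ->]]|[i [? ->]]]]]];
  [by left | right..].
- by apply: Gen_in; left; left; exists i, j.
- by apply: Gen_in; left; right; left; exists i.
- have Fi : inF n (gen i) by inF_auto.
  have Fi1 : inF n (gen i.+1) by inF_auto.
  have Fc : inF n (comm (gen i) (gen i.+1)) by inF_auto.
  rewrite /comm3 (@comm_from_mulV _ (gen i)); try rd.
  apply: Gen_mul; first by apply: Gen_in; left; right; left; exists i.
  apply: H_conj => //; apply: Gen_inv.
  by apply: Gen_in; left; right; right; left; exists i.
- by apply: Gen_in; left; right; right; right; exists i.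
Qed.

Definition congH (x y : word) : Prop := H (wmul x (winv y)).

Lemma congH_refl (x : word) : reduced x -> congH x x.
Proof. by move=> Hx; rewrite /congH wmulV //; exact: Gen_one. Qed.

Lemma congH_sym (x y : word) : reduced x -> reduced y -> congH x y -> congH y x.
Proof.
move=> Hx Hy /Gen_inv; rewrite /congH.
by have -> : winv (wmul x (winv y)) = wmul y (winv x) by gsimp.
Qed.

Lemma congH_trans (y x z : word) : reduced x -> reduced y -> reduced z ->
  congH x y -> congH y z -> congH x z.
Proof.
move=> Hx Hy Hz Hxy Hyz; have := Gen_mul Hxy Hyz.
by have -> : wmul (wmul x (winv y)) (wmul y (winv z)) = wmul x (winv z) by gsimp.
Qed.

Lemma congH_mulr (f x y : word) : reduced x -> reduced y -> reduced f ->
  congH x y -> congH (wmul x f) (wmul y f).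
Proof.
move=> Hx Hy Hf; rewrite /congH.
by have -> : wmul (wmul x f) (winv (wmul y f)) = wmul x (winv y) by gsimp.
Qed.

(* left multiplication needs f in F, through normality of H *)
Lemma congH_mull (f x y : word) : reduced x -> reduced y -> inF n f ->
  congH x y -> congH (wmul f x) (wmul f y).
Proof.
move=> Hx Hy Ff Hxy; rewrite /congH.
have -> : wmul (wmul f x) (winv (wmul f y)) = conj (wmul x (winv y)) (winv f).
  by rewrite /conj; gsimp.
by apply: H_conj => //; exact: inF_inv.
Qed.

Lemma congH_conj (r f : word) : R r -> inF n f -> congH (conj r f) r.
Proof.
move=> Rr Ff; have Fr := R_inF Rr; rewrite /congH.
have -> : wmul (conj r f) (winv r) = conj (comm r f) (winv r).
  by rewrite /conj /comm; gsimp.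
by apply: H_conj; [exact: comm_H | exact: inF_inv].
Qed.

Lemma congH_swap (r x : word) : R r -> inF n x -> congH (wmul r x) (wmul x r).
Proof.
move=> Rr Fx; have Fr := R_inF Rr; rewrite /congH.
have -> : wmul (wmul r x) (winv (wmul x r)) = comm (winv r) (winv x).
  by rewrite /comm; gsimp.
by apply: comm_H; [exact: Gen_inv | exact: inF_inv].
Qed.

Definition P (i : nat) : word := wpow (gen i) m.
#[local] Hint Extern 1 (is_true (reduced (P _))) => exact: wpow_red : reduced.

Definition Dl (L : seq nat) (a : nat -> nat) : word :=
  foldr (fun i acc => wmul (wpow (P i) (a i)) acc) wone L.

Definition valid_indices (L : seq nat) : bool := all (fun i => 0 < i < n) L.

Lemma Dl_red (L : seq nat) (a : nat -> nat) : reduced (Dl L a).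
Proof. by elim: L => //= i L IH; rd. Qed.
#[local] Hint Resolve Dl_red : reduced.

Lemma Dl_R (L : seq nat) (a : nat -> nat) : valid_indices L -> R (Dl L a).
Proof.
elim: L => [_|i L IH /andP[Hi HL]] /=; first exact: Gen_one.
apply: Gen_mul; last exact: IH.
by apply/Gen_wpow/Relators_R; left; exists i; split=> //; lia.
Qed.

Lemma Dl_inF (L : seq nat) (a : nat -> nat) : valid_indices L -> inF n (Dl L a).
Proof. by move/(Dl_R a)/R_inF. Qed.

Lemma Dl_ext (L : seq nat) (a b : nat -> nat) : {in L, a =1 b} -> Dl L a = Dl L b.
Proof.
elim: L => //= i L IH ab; rewrite ab ?mem_head // IH // => j Hj.
by apply: ab; rewrite in_cons Hj orbT.
Qed.

Lemma Dl0 (L : seq nat) (a : nat -> nat) : {in L, forall i, a i = 0} -> Dl L a = wone.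
Proof.
elim: L => //= i L IH a0; rewrite a0 ?mem_head //= IH // => j Hj.
by apply: a0; rewrite in_cons Hj orbT.
Qed.

Lemma Dl_delta (L : seq nat) (i : nat) : i \in L -> uniq L ->
  Dl L (fun j => if j == i then 1 else 0) = P i.
Proof.
elim: L => //= j L IH; rewrite in_cons => /orP[/eqP <-|Hi] /andP[HjL HL].
- rewrite eqxx /= Dl0 ?wmul1; try rd.
  by move=> k Hk; case: eqP => // E; rewrite -E Hk in HjL.
- have -> : (j == i) = false by apply/negbTE; apply: contraNneq HjL => ->.
  by rewrite IH.
Qed.

(* since R is central modulo H, (p x)(q y) ~ (p q)(x y) for q in R *)
Lemma congH_exchange (p q x y : word) : inF n p -> R q -> inF n x -> reduced y ->
  congH (wmul (wmul p x) (wmul q y)) (wmul (wmul p q) (wmul x y)).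
Proof.
move=> Fp Rq Fx Hy; have Fq := R_inF Rq.
have -> : wmul (wmul p x) (wmul q y) = wmul p (wmul (wmul x q) y) by gsimp.
have -> : wmul (wmul p q) (wmul x y) = wmul p (wmul (wmul q x) y) by gsimp.
apply: congH_mull => //; try rd; apply: congH_mulr; try rd.
by apply: congH_sym; try rd; exact: congH_swap.
Qed.

Lemma congH_Dl_add (L : seq nat) (a c : nat -> nat) : valid_indices L ->
  congH (wmul (Dl L c) (Dl L a)) (Dl L (fun i => c i + a i)).
Proof.
elim: L => [_|i L IH /andP[Hi HL]] /=; first exact: congH_refl.
have RPi k : R (wpow (P i) k).
  by apply/Gen_wpow/Relators_R; left; exists i; split=> //; lia.
apply: congH_trans (congH_exchange _ (RPi _) _ _) _; try rd.
- exact: R_inF.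
- exact: Dl_inF.
rewrite -wpowD; apply: congH_mull; [rd | rd | exact: R_inF | exact: IH].
Qed.

Lemma esum_Dl (i : nat) (L : seq nat) (a : nat -> nat) : uniq L ->
  esum i (Dl L a) = if i \in L then (Z.of_nat (a i) * Z.of_nat m)%Z else 0%Z.
Proof.
elim: L => //= j L IH /andP[HjL HL].
rewrite esum_mul IH // !esum_wpow esum_gen in_cons.
case: (eqVneq j i) => [E|Ne] /=.
- by subst j; rewrite (negbTE HjL); lia.
- by case: (i \in L); lia.
Qed.

Definition D (a : nat -> nat) : word := Dl (iota 1 n.-1) a.
#[local] Hint Extern 1 (is_true (reduced (D _))) => exact: Dl_red : reduced.

Lemma valid_iota : valid_indices (iota 1 n.-1).
Proof. by apply/allP => i; rewrite mem_iota; lia. Qed.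

Lemma D_inj (a b : nat -> nat) : 0 < m ->
  (forall i, esum i (D a) = esum i (D b)) -> D a = D b.
Proof.
move=> m_gt0 Eab; apply: Dl_ext => i Hi.
have := Eab i; rewrite /D !esum_Dl ?iota_uniq // Hi; nia.
Qed.

(* The invariant of R modulo H: w ~ D(b) D(a)^-1 for some exponents a, b. *)
Definition balanced (w : word) : Prop := exists a b, congH (wmul w (D a)) (D b).

Lemma D_inF (a : nat -> nat) : inF n (D a).
Proof. exact/Dl_inF/valid_iota. Qed.

Lemma D0 : D (fun _ => 0) = wone.
Proof. exact: Dl0. Qed.

Lemma balanced_Relators_conj (r f : word) : Relators n m r -> inF n f ->
  balanced (conj r f).
Proof.
move=> Hr Ff; have Rr := Relators_R Hr; have Fr := R_inF Rr.
exists (fun _ => 0); rewrite D0 wmul1; try rd.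
case: (Relators_H Hr) => [[i [Hi Er]] | Hh].
- exists (fun j => if j == i then 1 else 0).
  have Li : i \in iota 1 n.-1 by rewrite mem_iota; lia.
  by rewrite /D (Dl_delta Li (iota_uniq _ _)) /P -Er; exact: congH_conj.
- exists (fun _ => 0); rewrite D0 /congH wmul1; try rd.
  exact: H_conj.
Qed.

Lemma balanced_mul (x y : word) : inF n x -> inF n y ->
  balanced x -> balanced y -> balanced (wmul x y).
Proof.
move=> Fx Fy [a [b Hx]] [c [d Hy]].
have FD := D_inF.
exists (fun i => c i + a i), (fun i => b i + d i).
apply: (@congH_trans (wmul (wmul x y) (wmul (D c) (D a)))); try rd.
  apply: congH_mull; [rd | rd | exact: inF_mul |].
  by apply: congH_sym; try rd; exact/congH_Dl_add/valid_iota.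
have -> : wmul (wmul x y) (wmul (D c) (D a)) = wmul x (wmul (wmul y (D c)) (D a)) by gsimp.
apply: (@congH_trans (wmul x (wmul (D d) (D a)))); try rd.
  by apply: congH_mull; [rd | rd | done |]; apply: congH_mulr; try rd.
apply: (@congH_trans (wmul (wmul x (D a)) (D d))); try rd.
  have -> : wmul (wmul x (D a)) (D d) = wmul x (wmul (D a) (D d)) by gsimp.
  apply: congH_mull; [rd | rd | done |].
  by apply: congH_sym; try rd; apply: congH_swap; [exact/Dl_R/valid_iota |].
apply: (@congH_trans (wmul (D b) (D d))); try rd.
  by apply: congH_mulr; try rd.
exact/congH_Dl_add/valid_iota.
Qed.

Lemma balanced_inv (x : word) : inF n x -> balanced x -> balanced (winv x).
Proof.
move=> Fx [a [b Hx]]; exists b, a; have FD := D_inF.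
apply: (@congH_trans (wmul (winv x) (wmul x (D a)))); try rd.
  by apply: congH_mull; [rd | rd | exact: inF_inv | apply: congH_sym; rd].
by rewrite wmulVK; [apply: congH_refl | ]; rd.
Qed.

Lemma R_balanced (w : word) : R w -> balanced w.
Proof.
elim=> {w} [|u [r [f [Hr [Ff ->]]]]|x y Rx IHx Ry IHy|x Rx IHx].
- by exists (fun _ => 0), (fun _ => 0); rewrite D0; apply: congH_refl.
- exact: balanced_Relators_conj.
- exact: balanced_mul (R_inF Rx) (R_inF Ry) IHx IHy.
- exact: balanced_inv (R_inF Rx) IHx.
Qed.

Lemma congH_cancel (w : word) (a : nat -> nat) : reduced w ->
  congH (wmul w (D a)) (D a) -> H w.
Proof. by move=> Hw; rewrite /congH wmulA ?wmulV ?wmul1; rd. Qed.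

End Quotient.

Theorem mainTheorem2 (n m : nat) (hn : 3 <= n) (hm : 2 <= m) :
  (forall w, Gens n w -> Rsub n m w /\ FF n w) /\
  (forall w, Rsub n m w -> FF n w ->
     Gen (fun u => Gens n u \/ RF n m u) w).
Proof.
split=> [w Gw | w Rw FFw]; first by split; [exact: Gens_R | exact: Gens_FF].
have Fw := R_inF Rw.
have [a [b Hab]] := R_balanced Rw.
(* the exponent sums of w D(a) D(b)^-1 vanish, so D(a) = D(b) *)
have Eab : D n m a = D n m b.
  apply: D_inj; first lia.
  move=> i; have := esum_H i Hab.
  rewrite !esum_mul esum_inv (esum_FF i FFw); lia.
by rewrite -Eab in Hab; exact: congH_cancel (inF_red Fw) Hab.
Qed.
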